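(* Consider the system of ordinary differential equations for $(x(t),h(t),n(t))$: \[ \frac{dx}{dt} = x(1-x)S(h) + \mu(h)(1-x) - \nu x,\qquad \frac{dh}{dt} = \alpha n(1+\beta x)\,G(h) - \Gamma(n)(h-1),\qquad \frac{dn}{dt} = r n(1-n) - D(h,x)\,n, \] where \[ S(h) = \frac{s_0}{1+e^{-\lambda(h-h_c)}} - c + \varphi\, d_S(h),\quad d_S(h) = \frac{d_{\max} h^m}{h_{50}^m + h^m},\quad \mu(h)=\mu_0 h^p, \] \[ G(h) = \frac{K_g}{K_g+h},\quad \Gamma(n) = \frac{\gamma_0}{1+\eta n},\quad D(h,x) = (1-\varphi x)\,d_S(h), \] with parameters $s_0,\lambda,h_c,c,d_{\max},h_{50},m,\mu_0,p,\alpha,\beta,K_g,\gamma_0,\eta,r$ positive, $0<\varphi\le 1$, and $\nu=0$. Assume $\mathcal{R}_0^* = \dfrac{r}{d_{\max}} > 1$. Then the system has a unique equilibrium of the form $E_1=(1,h^*,n^* )$ with $h^*>0$ and $n^*>0$, and $E_1\in[0,1]\times(0,\infty)\times[0,1]$.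
   Context: The model describes a tumor: $x$ is the fraction of acid-resistant cells, $h$ is the normalized proton concentration ($h=1$ physiological), $n$ is normalized tumor density. An equilibrium with $x^*=1$ is one with no acid-sensitive cells. *)

From Stdlib Require Import Reals.
Open Scope R_scope.

Record params := Params {
  s0 : R; lam : R; hc : R; c : R; dmax : R; h50 : R; m : R; mu0 : R; p : R;
  alpha : R; beta : R; Kg : R; gamma0 : R; eta : R; r : R; phi : R; nu : R }.

Definition dS (P : params) (h : R) : R :=
  dmax P * Rpower h (m P) / (Rpower (h50 P) (m P) + Rpower h (m P)).

Definition Sfun (P : params) (h : R) : R :=
  s0 P / (1 + exp (- lam P * (h - hc P))) - c P + phi P * dS P h.

Definition mufun (P : params) (h : R) : R := mu0 P * Rpower h (p P).

Definition Gfun (P : params) (h : R) : R := Kg P / (Kg P + h).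

Definition Gammafun (P : params) (n : R) : R := gamma0 P / (1 + eta P * n).

Definition Dfun (P : params) (h x : R) : R := (1 - phi P * x) * dS P h.

Definition fx (P : params) (x h n : R) : R :=
  x * (1 - x) * Sfun P h + mufun P h * (1 - x) - nu P * x.
Definition fh (P : params) (x h n : R) : R :=
  alpha P * n * (1 + beta P * x) * Gfun P h - Gammafun P n * (h - 1).
Definition fn (P : params) (x h n : R) : R :=
  r P * n * (1 - n) - Dfun P h x * n.

Definition is_equilibrium (P : params) (x h n : R) : Prop :=
  fx P x h n = 0 /\ fh P x h n = 0 /\ fn P x h n = 0.

Definition admissible (P : params) : Prop :=
  0 < s0 P /\ 0 < lam P /\ 0 < hc P /\ 0 < c P /\ 0 < dmax P /\ 0 < h50 P /\
  0 < m P /\ 0 < mu0 P /\ 0 < p P /\ 0 < alpha P /\ 0 < beta P /\ 0 < Kg P /\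
  0 < gamma0 P /\ 0 < eta P /\ 0 < r P /\ 0 < phi P /\ phi P <= 1 /\ nu P = 0.

(** At [x = 1] the [x]-equation holds identically (since [nu = 0]), the
    [n]-equation with [n > 0] forces [n = 1 - (1 - phi) d_S(h) / r], which lies in
    [(0, 1]] because [d_S < dmax < r], and the [h]-equation becomes
    [alpha (1 + beta) Kg n (1 + eta n) = gamma0 (Kg + h) (h - 1)].  The left-hand
    side is positive, bounded and nonincreasing in [h] (as [d_S] increases), while
    the right-hand side is nonpositive for [h <= 1] and strictly increasing and
    unbounded for [h >= 1]; hence there is exactly one root [h* > 1], found by the
    intermediate value theorem. *)

From Stdlib Require Import Reals Lra.
Open Scope R_scope.

Lemma Rpower_pos (x y : R) : 0 < Rpower x y.
Proof. apply exp_pos. Qed.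

Lemma continuity_pt_Rpower_base (y x : R) :
  0 < x -> continuity_pt (fun t => Rpower t y) x.
Proof.
  intro Hx. apply derivable_continuous_pt.
  exists (y * Rpower x (y - 1)). exact (derivable_pt_lim_power x y Hx).
Qed.

Lemma mul_add1_le (e a b : R) :
  0 <= e -> 0 <= a <= b -> a * (1 + e * a) <= b * (1 + e * b).
Proof.
  intros He Hab.
  assert (0 <= (b - a) * (e * (a + b))) by (apply Rmult_le_pos; nra).
  nra.
Qed.

Section Equilibria.

Variable P : params.

Hypothesis dmax_pos : 0 < dmax P.
Hypothesis m_pos : 0 < m P.
Hypothesis dmax_lt_r : dmax P < r P.
Hypothesis phi_ge0 : 0 <= phi P.
Hypothesis phi_le1 : phi P <= 1.
Hypothesis alpha_pos : 0 < alpha P.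
Hypothesis beta_pos : 0 < beta P.
Hypothesis Kg_pos : 0 < Kg P.
Hypothesis gamma0_pos : 0 < gamma0 P.
Hypothesis eta_pos : 0 < eta P.
Hypothesis nu_0 : nu P = 0.

Lemma dS_pos (h : R) : 0 < dS P h.
Proof.
  unfold dS. pose proof (Rpower_pos (h50 P) (m P)). pose proof (Rpower_pos h (m P)).
  apply Rdiv_lt_0_compat; nra.
Qed.

Lemma dS_lt_dmax (h : R) : dS P h < dmax P.
Proof.
  unfold dS. pose proof (Rpower_pos (h50 P) (m P)). pose proof (Rpower_pos h (m P)).
  apply (Rmult_lt_reg_r (Rpower (h50 P) (m P) + Rpower h (m P))); [lra|].
  unfold Rdiv. rewrite Rmult_assoc, Rinv_l by lra. nra.
Qed.

Lemma dS_le (h1 h2 : R) : 0 < h1 <= h2 -> dS P h1 <= dS P h2.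
Proof.
  intro Hh. unfold dS.
  pose proof (Rpower_pos (h50 P) (m P)) as HA.
  pose proof (Rpower_pos h1 (m P)) as HT1. pose proof (Rpower_pos h2 (m P)) as HT2.
  assert (HT : Rpower h1 (m P) <= Rpower h2 (m P)) by (apply Rle_Rpower_l; lra).
  set (A := Rpower (h50 P) (m P)) in *.
  set (T1 := Rpower h1 (m P)) in *. set (T2 := Rpower h2 (m P)) in *.
  apply (Rmult_le_reg_r ((A + T1) * (A + T2))); [nra|].
  replace (dmax P * T1 / (A + T1) * ((A + T1) * (A + T2))) with (dmax P * T1 * (A + T2))
    by (field; lra).
  replace (dmax P * T2 / (A + T2) * ((A + T1) * (A + T2))) with (dmax P * T2 * (A + T1))
    by (field; lra).
  assert (0 <= dmax P * A * (T2 - T1)) by (apply Rmult_le_pos; nra).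
  nra.
Qed.

Lemma continuity_pt_dS (h : R) : 0 < h -> continuity_pt (dS P) h.
Proof.
  intro Hh. unfold dS.
  pose proof (Rpower_pos (h50 P) (m P)). pose proof (Rpower_pos h (m P)).
  set (g := fun t => Rpower t (m P)).
  change (continuity_pt (fun t => dmax P * g t / (Rpower (h50 P) (m P) + g t)) h).
  assert (continuity_pt g h) by exact (continuity_pt_Rpower_base _ _ Hh).
  reg. unfold g. lra.
Qed.

Definition n_star (h : R) : R := 1 - (1 - phi P) * dS P h / r P.

Lemma n_star_pos (h : R) : 0 < n_star h.
Proof.
  unfold n_star. pose proof (dS_pos h). pose proof (dS_lt_dmax h).
  assert ((1 - phi P) * dS P h / r P < 1).
  { apply (Rmult_lt_reg_r (r P)); [lra|].
    unfold Rdiv. rewrite Rmult_assoc, Rinv_l by lra. nra. }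
  lra.
Qed.

Lemma n_star_le1 (h : R) : n_star h <= 1.
Proof.
  unfold n_star. pose proof (dS_pos h).
  assert (0 <= (1 - phi P) * dS P h / r P)
    by (apply Rmult_le_pos; [nra | left; apply Rinv_0_lt_compat; lra]).
  lra.
Qed.

Lemma n_star_le (h1 h2 : R) : 0 < h1 <= h2 -> n_star h2 <= n_star h1.
Proof.
  intro Hh. unfold n_star, Rdiv. pose proof (dS_le h1 h2 Hh).
  pose proof (Rinv_0_lt_compat (r P) ltac:(lra)).
  assert (0 <= (1 - phi P) * / r P * (dS P h2 - dS P h1))
    by (apply Rmult_le_pos; [apply Rmult_le_pos|]; lra).
  nra.
Qed.

Lemma continuity_pt_n_star (h : R) : 0 < h -> continuity_pt n_star h.
Proof.
  intro Hh. unfold n_star. pose proof (continuity_pt_dS h Hh). reg.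
Qed.

Definition production (n : R) : R :=
  alpha P * (1 + beta P) * Kg P * (n * (1 + eta P * n)).

Definition clearance (h : R) : R := gamma0 P * (Kg P + h) * (h - 1).

Definition balance (h : R) : R := production (n_star h) - clearance h.

Lemma fn_at_1 (h n : R) : fn P 1 h n = r P * n * (n_star h - n).
Proof. unfold fn, Dfun, n_star. field. lra. Qed.

Lemma fh_at_1 (h n : R) : 0 < h -> 0 < n ->
  fh P 1 h n = (production n - clearance h) / ((Kg P + h) * (1 + eta P * n)).
Proof.
  intros Hh Hn. unfold fh, Gfun, Gammafun, production, clearance.
  field. split; nra.
Qed.

Lemma equilibrium_at_1_iff (h n : R) : 0 < h -> 0 < n ->
  is_equilibrium P 1 h n <-> n = n_star h /\ balance h = 0.
Proof.
  intros Hh Hn. unfold is_equilibrium, balance.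
  assert (Hfx : fx P 1 h n = 0) by (unfold fx; rewrite nu_0; ring).
  rewrite fn_at_1, fh_at_1 by assumption.
  assert (Hden : 0 < (Kg P + h) * (1 + eta P * n)) by (apply Rmult_lt_0_compat; nra).
  split.
  - intros (_ & Hfh & Hfn).
    assert (Hn_eq : n = n_star h).
    { apply Rmult_integral in Hfn as [Hrn | Hdiff]; [nra | lra]. }
    split; [exact Hn_eq|]. rewrite <- Hn_eq.
    apply (Rmult_eq_reg_r (/ ((Kg P + h) * (1 + eta P * n)))); [|apply Rinv_neq_0_compat; lra].
    rewrite Rmult_0_l. exact Hfh.
  - intros [Hn_eq Hbal]. rewrite <- Hn_eq in Hbal.
    split; [exact Hfx|]. split.
    + unfold Rdiv. rewrite Hbal. ring.
    + rewrite <- Hn_eq. ring.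
Qed.

Lemma production_pos (n : R) : 0 < n -> 0 < production n.
Proof. intro Hn. unfold production. repeat apply Rmult_lt_0_compat; nra. Qed.

Lemma production_le (n1 n2 : R) : 0 <= n1 <= n2 -> production n1 <= production n2.
Proof.
  intro Hn. unfold production. apply Rmult_le_compat_l.
  - repeat apply Rmult_le_pos; lra.
  - apply mul_add1_le; lra.
Qed.

Lemma clearance_nonpos (h : R) : 0 < h <= 1 -> clearance h <= 0.
Proof.
  intro Hh. unfold clearance.
  assert (0 <= gamma0 P * (Kg P + h) * (1 - h)) by (repeat apply Rmult_le_pos; lra).
  lra.
Qed.

Lemma clearance_lt (h1 h2 : R) : 1 <= h1 < h2 -> clearance h1 < clearance h2.
Proof.
  intro Hh. unfold clearance.
  assert (0 < gamma0 P * ((h2 - h1) * (h1 + h2 + Kg P - 1)))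
    by (repeat apply Rmult_lt_0_compat; lra).
  nra.
Qed.

Lemma clearance_ge (h : R) : 1 <= h -> gamma0 P * Kg P * (h - 1) <= clearance h.
Proof.
  intro Hh. unfold clearance.
  assert (0 <= gamma0 P * h * (h - 1)) by (repeat apply Rmult_le_pos; lra).
  nra.
Qed.

Lemma balance_root_gt1 (h : R) : 0 < h -> balance h = 0 -> 1 < h.
Proof.
  intros Hh Hbal. unfold balance in Hbal.
  pose proof (production_pos _ (n_star_pos h)).
  destruct (Rle_lt_dec h 1) as [Hle | Hgt]; [|exact Hgt].
  pose proof (clearance_nonpos h (conj Hh Hle)). lra.
Qed.

Lemma balance_lt (h1 h2 : R) : 1 <= h1 < h2 -> balance h2 < balance h1.
Proof.
  intro Hh. unfold balance.
  pose proof (clearance_lt h1 h2 Hh).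
  assert (production (n_star h2) <= production (n_star h1)).
  { apply production_le. pose proof (n_star_pos h2). pose proof (n_star_le h1 h2). lra. }
  lra.
Qed.

Lemma balance_root_unique (h1 h2 : R) : 0 < h1 -> 0 < h2 ->
  balance h1 = 0 -> balance h2 = 0 -> h1 = h2.
Proof.
  intros Hh1 Hh2 Hb1 Hb2.
  pose proof (balance_root_gt1 h1 Hh1 Hb1). pose proof (balance_root_gt1 h2 Hh2 Hb2).
  destruct (Rtotal_order h1 h2) as [Hlt | [Heq | Hgt]]; [|exact Heq|].
  - pose proof (balance_lt h1 h2 ltac:(lra)). lra.
  - pose proof (balance_lt h2 h1 ltac:(lra)). lra.
Qed.

Lemma continuity_pt_balance (h : R) : 0 < h -> continuity_pt balance h.
Proof.
  intro Hh. pose proof (continuity_pt_n_star h Hh).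
  unfold balance, production, clearance. reg.
Qed.

Lemma balance_root_exists : exists h, 1 <= h /\ balance h = 0.
Proof.
  (* [production (n_star h) <= production 1] while [clearance h >= gamma0 Kg (h - 1)]. *)
  set (M := 2 + production 1 / (gamma0 P * Kg P)).
  assert (Hquot : 0 < production 1 / (gamma0 P * Kg P))
    by (apply Rdiv_lt_0_compat; [apply production_pos|]; nra).
  assert (Hbal1 : 0 < balance 1).
  { unfold balance, clearance. pose proof (production_pos _ (n_star_pos 1)). nra. }
  assert (HbalM : balance M < 0).
  { unfold balance.
    assert (production (n_star M) <= production 1).
    { apply production_le. pose proof (n_star_pos M). pose proof (n_star_le1 M). lra. }
    pose proof (clearance_ge M ltac:(unfold M; lra)).
    assert (gamma0 P * Kg P * (M - 1) = gamma0 P * Kg P + production 1)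
      by (unfold M; field; lra).
    nra. }
  destruct (Ranalysis5.IVT_interv (fun h => - balance h) 1 M) as (h & Hrange & Hroot).
  - intros a Ha. apply continuity_pt_opp, continuity_pt_balance. lra.
  - unfold M. lra.
  - lra.
  - lra.
  - exists h. split; lra.
Qed.

End Equilibria.

Theorem theorem3 (P : params) :
  admissible P ->
  r P / dmax P > 1 ->
  exists hs ns : R,
    0 < hs /\ 0 < ns /\ is_equilibrium P 1 hs ns /\
    (forall h n : R, 0 < h -> 0 < n -> is_equilibrium P 1 h n -> h = hs /\ n = ns) /\
    (0 <= 1 <= 1 /\ 0 < hs /\ 0 <= ns <= 1).
Proof.
  intros (_ & _ & _ & _ & Hd & _ & Hm & _ & _ & Hal & Hbe & HKg & Hg0 & Het & _ & Hph & Hph1 & Hnu) HR0.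
  assert (Hdr : dmax P < r P).
  { apply (Rmult_lt_reg_r (/ dmax P)); [now apply Rinv_0_lt_compat|].
    rewrite Rinv_r by lra. exact HR0. }
  assert (Hph0 : 0 <= phi P) by lra.
  destruct (balance_root_exists P) as (hs & Hhs & Hroot); try assumption.
  assert (Hns : 0 < n_star P hs <= 1)
    by (split; [apply n_star_pos | apply n_star_le1]; assumption).
  exists hs, (n_star P hs).
  split; [lra|]. split; [lra|]. split.
  - apply equilibrium_at_1_iff; try assumption; lra.
  - split; [|repeat split; lra].
    intros h n Hh Hn Heq.
    apply equilibrium_at_1_iff in Heq as [-> Hbal]; try assumption.
    assert (h = hs) by (apply (balance_root_unique P); try assumption; lra).
    subst h. split; reflexivity.
Qed.
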